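(* Let $v_0$ be a unit $K$-invariant vector of $V$ and define $v_\ell=\mathcal Z_\ell(v_{\ell-1})$ for $\ell\ge1$. Then for every $\ell\ge1$, $$v_\ell=a_\ell\tilde Hv_{\ell-1}+b_\ell v_{\ell-2},$$ where $a_\ell=-2\ell+1$, $b_\ell=(\ell-1)^2(\ell(\ell-2)-s(s-2))$, and $v_{-1}$ is understood as the zero vector.
   Context: Let $G=\mathrm{PSL}_2(\mathbb C)$, $K=\mathrm{PSU}(2)$, $\mathfrak g=\mathfrak{sl}_2(\mathbb C)$ as a real Lie algebra and $\mathfrak g_{\mathbb C}=\mathfrak g\otimes_{\mathbb R}\mathbb C$, with $\mathbf i$ the imaginary unit of the complexification (distinct from the scalar $i$ inside matrices). With $H=\mathrm{diag}(1,-1)$, $E=\begin{pmatrix}0&1\\0&0\end{pmatrix}$, $F=\begin{pmatrix}0&0\\1&0\end{pmatrix}$, set $D=\tfrac{i}{2}H$, $X_1=\tfrac12(E-F)$, $X_2=\tfrac i2(E+F)$, $E^+=X_1-\mathbf iX_2$, $E^-=-X_1-\mathbf iX_2$, $\tilde H=\tfrac12H$, $Y_1=\tfrac12(E+F)$, $Y_2=\tfrac i2(E-F)$, $R=Y_1-\mathbf iY_2$, $L=-Y_1-\mathbf iY_2$, and $\mathcal Z_\ell=\tfrac12(RE^-+LE^+-2(\ell+1)\tilde H)$. $V=\mathcal H_s$, $1<s<2$, is the complementary series representation of $G$: the irreducible unitary representation with nonzero $K$-invariant vectors on whose smooth vectors the Casimir element $\mathcal C=\mathcal C_K+\tilde H^2-\tfrac12(RL+LR)$,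 with $\mathcal C_K=-D^2+\tfrac12(E^+E^-+E^-E^+)$, acts by the scalar $s(s-2)$; $\mathfrak g_{\mathbb C}$ and its enveloping algebra act on smooth vectors via the complex-linear extension of the derived representation. *)

From HB Require Import structures.
From mathcomp Require Import all_boot all_algebra complex reals.

Set Implicit Arguments.
Unset Strict Implicit.
Unset Printing Implicit Defensive.

Import GRing.Theory Num.Theory.
Local Open Scope ring_scope.

Section SL2C.
Variable R : realType.

(* The complex numbers; [ci] is the scalar i occurring inside matrices and also
   the scalar used for the complex structure of V. *)
Notation C := (R[i]).
Definition ci : C := Complex 0 1.
Definition rC (r : R) : C := Complex r 0.

(* Elements of g = sl_2(C), viewed as a real Lie algebra, are the traceless
   complex 2x2 matrices. *)
Definition mxH : 'M[C]_2 := \matrix_(i < 2, j < 2)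
  (if (i == j) then (if i == 0 then 1 else -1) else 0).
Definition mxE : 'M[C]_2 := \matrix_(i < 2, j < 2)
  (if (i == 0) && (j == 1) then 1 else 0).
Definition mxF : 'M[C]_2 := \matrix_(i < 2, j < 2)
  (if (i == 1) && (j == 0) then 1 else 0).

Definition elD  : 'M[C]_2 := (ci / 2) *: mxH.
Definition elX1 : 'M[C]_2 := (1 / 2) *: (mxE - mxF).
Definition elX2 : 'M[C]_2 := (ci / 2) *: (mxE + mxF).
Definition elHt : 'M[C]_2 := (1 / 2) *: mxH.
Definition elY1 : 'M[C]_2 := (1 / 2) *: (mxE + mxF).
Definition elY2 : 'M[C]_2 := (ci / 2) *: (mxE - mxF).

Definition traceless (X : 'M[C]_2) := \tr X = 0.

(* A unitary representation of the real Lie algebra g on a complex inner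
   product space V (playing the role of the smooth vectors of a unitary
   representation of G): [act X] is the derived action of X in g.
   - act X is complex linear in the vector;
   - X |-> act X is REAL linear on g;
   - brackets are preserved;
   - the inner product is a positive definite Hermitian form for which every
     act X (X in g) is skew-adjoint (unitarity). *)
Record unitary_g_module (V : lmodType C) := UnitaryGModule {
  act : 'M[C]_2 -> V -> V;
  inner : V -> V -> C;
  act_linear : forall X (a : C) (u v : V),
      act X (a *: u + v) = a *: act X u + act X v;
  act_real_linear : forall (r : R) (X Y : 'M[C]_2) (v : V),
      traceless X -> traceless Y ->
      act (rC r *: X + Y) v = rC r *: act X v + act Y v;
  act_bracket : forall (X Y : 'M[C]_2) (v : V),
      traceless X -> traceless Y ->
      act (X *m Y - Y *m X) v = act X (act Y v) - act Y (act X v);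
  inner_linear : forall (a : C) (u v w : V),
      inner (a *: u + v) w = a * inner u w + inner v w;
  inner_hermitian : forall u v : V, inner u v = conjc (inner v u);
  inner_posdef : forall v : V, v != 0 -> 0 < inner v v;
  act_skew : forall (X : 'M[C]_2) (u v : V),
      traceless X -> inner (act X u) v = - inner u (act X v)
}.

Variable V : lmodType C.
Variable M : unitary_g_module V.

(* Complex-linear extension to g_C = g (x)_R C: the element X + i Y
   (i the imaginary unit of the complexification) acts by
   act X + ci *: act Y. *)
Definition cact (X Y : 'M[C]_2) (v : V) : V := act M X v + ci *: act M Y v.

Definition opD  (v : V) : V := act M elD v.
Definition opHt (v : V) : V := act M elHt v.
Definition opEp (v : V) : V := cact elX1 (- elX2) v.        (* E^+ = X1 - iX2 *)
Definition opEm (v : V) : V := cact (- elX1) (- elX2) v.    (* E^- = -X1 - iX2 *)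
Definition opR  (v : V) : V := cact elY1 (- elY2) v.        (* R = Y1 - iY2 *)
Definition opL  (v : V) : V := cact (- elY1) (- elY2) v.    (* L = -Y1 - iY2 *)

Definition opZ (l : nat) (v : V) : V :=
  (1 / 2) *: (opR (opEm v) + opL (opEp v) - (2 * (l + 1))%:R *: opHt v).

Definition casimir (v : V) : V :=
  - opD (opD v) + (1 / 2) *: (opEp (opEm v) + opEm (opEp v))
  + opHt (opHt v) - (1 / 2) *: (opR (opL v) + opL (opR v)).

(* K-invariance of a smooth vector (K = PSU(2) connected): annihilated by
   k = su(2) = span_R(D, X1, X2). *)
Definition K_invariant (v : V) : Prop :=
  act M elD v = 0 /\ act M elX1 v = 0 /\ act M elX2 v = 0.

Fixpoint vseq (v0 : V) (n : nat) : V :=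
  match n with
  | 0 => v0
  | n'.+1 => opZ n' (vseq v0 n')
  end.

Definition vprev2 (v0 : V) (l : nat) : V :=
  if l is l'.+2 then vseq v0 l' else 0.

End SL2C.

From Pilot Require Import Defs.
From HB Require Import structures.
From mathcomp Require Import all_boot all_algebra complex reals ring.
Import GRing.Theory Num.Theory.

Set Implicit Arguments.
Unset Strict Implicit.
Unset Printing Implicit Defensive.
Local Open Scope ring_scope.

(* Write Q = E^+E^- + E^-E^+, P = RL + LR and W = RE^- + LE^+ ([opEE], [opRL]
   and [opRE] below), so that Z_m = (W - 2(m+1) H~) / 2, and on vectors killed
   by D the Casimir equation reads P = Q + 2 H~^2 - 2 s(s-2).  The brackets of
   sl_2(C) give W H~ = H~ W - Q - P and Q H~ = H~ Q - 2 W + 4 H~.  Starting from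
   the K-invariant v_0, induction on m shows that D v_m = 0, Q v_m = 2 m(m+1) v_m
   and W v_m = -2m H~ v_m + 2 b_(m+1) v_(m-1); substituting the last identity
   into Z_m v_m gives the recurrence. *)

Section LinearCombination.
Variables (K : pzRingType) (V : lmodType K) (e : seq V).

Definition lcomb (c : nat -> K) : V := \sum_(i < size e) c i *: e`_i.

Lemma lcomb_nth k : (k < size e)%N -> e`_k = lcomb (fun i => (i == k)%:R).
Proof.
move=> lt_k_e; rewrite /lcomb (bigD1 (Ordinal lt_k_e)) //= eqxx scale1r.
rewrite big1 ?addr0 // => i ne_i_k.
have /negbTE -> : val i != k by rewrite -[k]/(val (Ordinal lt_k_e)) (inj_eq val_inj).
by rewrite scale0r.
Qed.

Lemma lcomb0 : 0 = lcomb (fun=> 0).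
Proof. by rewrite /lcomb big1 // => i _; rewrite scale0r. Qed.

Lemma lcombD c c' : lcomb c + lcomb c' = lcomb (fun i => c i + c' i).
Proof. by rewrite /lcomb -big_split; apply: eq_bigr => i _; rewrite scalerDl. Qed.

Lemma lcombN c : - lcomb c = lcomb (fun i => - c i).
Proof. by rewrite /lcomb -sumrN; apply: eq_bigr => i _; rewrite scaleNr. Qed.

Lemma lcombZ a c : a *: lcomb c = lcomb (fun i => a * c i).
Proof. by rewrite /lcomb scaler_sumr; apply: eq_bigr => i _; rewrite scalerA. Qed.

Lemma eq_lcomb c c' :
  (forall i, (i < size e)%N -> c i = c' i) -> lcomb c = lcomb c'.
Proof. by move=> eq_c; apply: eq_bigr => i _; rewrite eq_c. Qed.

End LinearCombination.

(* [lincomb [:: a_0; ...; a_n]] proves an identity between linear combinations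
   of the vectors a_k over a numeric field by comparing coefficients. *)
Ltac lcomb_atoms e s k :=
  lazymatch s with
  | ?a :: ?s' => rewrite -[a]/(e`_k); lcomb_atoms e s' k.+1
  | _ => idtac
  end.

Ltac lcomb_coeffs :=
  first [done | case; [by move=> _ /=; field | simpl; lcomb_coeffs]].

Ltac lincomb atoms :=
  let e := fresh "e" in
  pose e := atoms; lcomb_atoms e atoms 0%N;
  rewrite ?(lcomb_nth (e := e)) // ?(lcomb0 e) ?(lcombN, lcombZ, lcombD);
  apply: eq_lcomb; rewrite /e; lcomb_coeffs.

Section Sl2Matrices.
Variable R : realType.
Local Notation C := R[i].

Definition mx2 (a b c d : C) : 'M[C]_2 :=
  \matrix_(i, j) if i == 0 then (if j == 0 then a else b) else (if j == 0 then c else d).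

Lemma mx2_eta (A : 'M[C]_2) : A = mx2 (A 0 0) (A 0 1) (A 1 0) (A 1 1).
Proof.
apply/matrixP => i j; rewrite !mxE.
by case: i => -[|[|//]] ?; case: j => -[|[|//]] ? /=; congr (A _ _); apply: val_inj.
Qed.

Definition mxlie (X Y : 'M[C]_2) := X *m Y - Y *m X.

Lemma mxlie_mx2 a b c d a' b' c' d' :
  mxlie (mx2 a b c d) (mx2 a' b' c' d') =
  mx2 (b * c' - b' * c) (a * b' + b * d' - a' * b - b' * d)
      (c * a' + d * c' - c' * a - d' * c) (c * b' - c' * b).
Proof.
by rewrite /mxlie [LHS]mx2_eta; congr mx2; rewrite !mxE !big_ord_recl !big_ord0 !mxE /=; ring.
Qed.

Lemma oppmx2 a b c d : - mx2 a b c d = mx2 (- a) (- b) (- c) (- d).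
Proof. by rewrite [LHS]mx2_eta !mxE. Qed.

Lemma mx2_0 : 0 = mx2 0 0 0 0.
Proof. by rewrite [LHS]mx2_eta !mxE. Qed.

Lemma mxtrace_mx2 a b c d : \tr (mx2 a b c d) = a + d.
Proof. by rewrite /mxtrace !big_ord_recl big_ord0 !mxE addr0. Qed.

Ltac mx2_of_basis := rewrite [LHS]mx2_eta; congr mx2; rewrite !mxE /=; ring.

Lemma elD_mx2 : elD R = mx2 (ci R / 2) 0 0 (- (ci R / 2)).
Proof. by rewrite /elD /mxH; mx2_of_basis. Qed.
Lemma elX1_mx2 : elX1 R = mx2 0 (1 / 2) (- (1 / 2)) 0.
Proof. by rewrite /elX1 /Defs.mxE /mxF; mx2_of_basis. Qed.
Lemma elX2_mx2 : elX2 R = mx2 0 (ci R / 2) (ci R / 2) 0.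
Proof. by rewrite /elX2 /Defs.mxE /mxF; mx2_of_basis. Qed.
Lemma elHt_mx2 : elHt R = mx2 (1 / 2) 0 0 (- (1 / 2)).
Proof. by rewrite /elHt /mxH; mx2_of_basis. Qed.
Lemma elY1_mx2 : elY1 R = mx2 0 (1 / 2) (1 / 2) 0.
Proof. by rewrite /elY1 /Defs.mxE /mxF; mx2_of_basis. Qed.
Lemma elY2_mx2 : elY2 R = mx2 0 (ci R / 2) (- (ci R / 2)) 0.
Proof. by rewrite /elY2 /Defs.mxE /mxF; mx2_of_basis. Qed.

Let basis_mx2 := (elD_mx2, elX1_mx2, elX2_mx2, elHt_mx2, elY1_mx2, elY2_mx2).

Ltac traceless_basis := rewrite /traceless basis_mx2 mxtrace_mx2; ring.

Lemma traceless_elD : traceless (elD R). Proof. traceless_basis. Qed.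
Lemma traceless_elX1 : traceless (elX1 R). Proof. traceless_basis. Qed.
Lemma traceless_elX2 : traceless (elX2 R). Proof. traceless_basis. Qed.
Lemma traceless_elHt : traceless (elHt R). Proof. traceless_basis. Qed.
Lemma traceless_elY1 : traceless (elY1 R). Proof. traceless_basis. Qed.
Lemma traceless_elY2 : traceless (elY2 R). Proof. traceless_basis. Qed.

Ltac mxlie_basis := rewrite !basis_mx2 mxlie_mx2 ?oppmx2 ?mx2_0; congr mx2; field.

Lemma mxlie_D_Ht : mxlie (elD R) (elHt R) = 0. Proof. by mxlie_basis. Qed.
Lemma mxlie_X1_Ht : mxlie (elX1 R) (elHt R) = - elY1 R. Proof. by mxlie_basis. Qed.
Lemma mxlie_X2_Ht : mxlie (elX2 R) (elHt R) = - elY2 R. Proof. by mxlie_basis. Qed.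
Lemma mxlie_Ht_Y1 : mxlie (elHt R) (elY1 R) = elX1 R. Proof. by mxlie_basis. Qed.
Lemma mxlie_Ht_Y2 : mxlie (elHt R) (elY2 R) = elX2 R. Proof. by mxlie_basis. Qed.
Lemma mxlie_X1_Y1 : mxlie (elX1 R) (elY1 R) = elHt R. Proof. by mxlie_basis. Qed.
Lemma mxlie_X1_Y2 : mxlie (elX1 R) (elY2 R) = 0. Proof. by mxlie_basis. Qed.
Lemma mxlie_X2_Y1 : mxlie (elX2 R) (elY1 R) = 0. Proof. by mxlie_basis. Qed.

Lemma mulii : ci R * ci R = -1.
Proof. by rewrite -expr2 sqr_i. Qed.

Lemma mxlie_X2_Y2 : mxlie (elX2 R) (elY2 R) = elHt R.
Proof.
have mulii_half : ci R / 2 * (ci R / 2) = - (1 / 4).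
  by rewrite mulrACA mulii; field.
by rewrite !basis_mx2 mxlie_mx2; congr mx2; rewrite ?mulrN ?mulNr ?mulii_half; field.
Qed.

End Sl2Matrices.

(* Abstract operators keep the rewriting below away from the concrete matrices. *)
Section Complexification.
Variables (K : numFieldType) (V : lmodType K) (i : K).
Hypothesis mulii : i * i = -1.
Variables h x1 x2 y1 y2 : {linear V -> V}.
Hypotheses (x1_h : forall v, x1 (h v) = h (x1 v) - y1 v)
  (x2_h : forall v, x2 (h v) = h (x2 v) - y2 v)
  (h_y1 : forall v, h (y1 v) = y1 (h v) + x1 v)
  (h_y2 : forall v, h (y2 v) = y2 (h v) + x2 v)
  (x1_y1 : forall v, x1 (y1 v) = y1 (x1 v) + h v)
  (x1_y2 : forall v, x1 (y2 v) = y2 (x1 v))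
  (x2_y1 : forall v, x2 (y1 v) = y1 (x2 v))
  (x2_y2 : forall v, x2 (y2 v) = y2 (x2 v) + h v).
Variables ep em r l : V -> V.
Hypotheses (epE : forall v, ep v = x1 v - i *: x2 v)
  (emE : forall v, em v = - x1 v - i *: x2 v)
  (rE : forall v, r v = y1 v - i *: y2 v)
  (lE : forall v, l v = - y1 v - i *: y2 v).

Lemma ep_h v : ep (h v) = h (ep v) - r v.
Proof.
rewrite !epE rE x1_h x2_h !(linearB h, linearZZ h).
by lincomb [:: h (x1 v); h (x2 v); y1 v; y2 v].
Qed.

Lemma em_h v : em (h v) = h (em v) - l v.
Proof.
rewrite !emE lE x1_h x2_h !(linearB h, linearN h, linearZZ h).
by lincomb [:: h (x1 v); h (x2 v); y1 v; y2 v].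
Qed.

Lemma r_h v : r (h v) = h (r v) - ep v.
Proof.
rewrite !rE epE !(linearB h, linearZZ h) h_y1 h_y2.
by lincomb [:: y1 (h v); y2 (h v); x1 v; x2 v].
Qed.

Lemma l_h v : l (h v) = h (l v) - em v.
Proof.
rewrite !lE emE !(linearB h, linearN h, linearZZ h) h_y1 h_y2.
by lincomb [:: y1 (h v); y2 (h v); x1 v; x2 v].
Qed.

Lemma ep_l v : ep (l v) = l (ep v) - 2 *: h v.
Proof.
rewrite epE !lE epE !(linearB x1, linearN x1, linearZZ x1, linearB x2, linearN x2, linearZZ x2).
rewrite !(linearB y1, linearZZ y1, linearB y2, linearZZ y2) x1_y1 x1_y2 x2_y1 x2_y2.
rewrite !(scalerDr, scalerBr, scalerN, scalerA) mulii.
by lincomb [:: y1 (x1 v); y2 (x1 v); y1 (x2 v); y2 (x2 v); h v].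
Qed.

Lemma em_r v : em (r v) = r (em v) - 2 *: h v.
Proof.
rewrite emE !rE emE !(linearB x1, linearZZ x1, linearB x2, linearZZ x2).
rewrite !(linearB y1, linearN y1, linearZZ y1, linearB y2, linearN y2, linearZZ y2).
rewrite x1_y1 x1_y2 x2_y1 x2_y2 !(scalerDr, scalerBr, scalerN, scalerA) mulii.
by lincomb [:: y1 (x1 v); y2 (x1 v); y1 (x2 v); y2 (x2 v); h v].
Qed.

End Complexification.

Section LadderRecurrence.
Variables (K : numFieldType) (V : lmodType K).
Variables d h ep em r l : {linear V -> V}.
Hypotheses (d_h : forall v, d (h v) = h (d v))
  (ep_h : forall v, ep (h v) = h (ep v) - r v)
  (em_h : forall v, em (h v) = h (em v) - l v)
  (r_h : forall v, r (h v) = h (r v) - ep v)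
  (l_h : forall v, l (h v) = h (l v) - em v)
  (ep_l : forall v, ep (l v) = l (ep v) - 2 *: h v)
  (em_r : forall v, em (r v) = r (em v) - 2 *: h v).

Definition opEE : {linear V -> V} := (ep \o em) \+ (em \o ep).
Definition opRL : {linear V -> V} := (r \o l) \+ (l \o r).
Definition opRE : {linear V -> V} := (r \o em) \+ (l \o ep).

Lemma opRE_h w : opRE (h w) = h (opRE w) - opEE w - opRL w.
Proof.
rewrite /opRE /opEE /opRL /= ep_h em_h !(linearB r, linearB l) r_h l_h linearD.
by lincomb [:: h (r (em w)); h (l (ep w)); ep (em w); em (ep w); r (l w); l (r w)].
Qed.

Lemma opEE_h w : opEE (h w) = h (opEE w) - 2 *: opRE w + 4 *: h w.
Proof.
rewrite /opRE /opEE /= ep_h em_h !(linearB ep, linearB em) ep_h em_h ep_l em_r !(linearD h).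
by lincomb [:: h (ep (em w)); h (em (ep w)); r (em w); l (ep w); h w].
Qed.

Variable c : K.
Hypothesis casimir_eq : forall v, - d (d v) + (1 / 2) *: (ep (em v) + em (ep v))
  + h (h v) - (1 / 2) *: (r (l v) + l (r v)) = c *: v.

Lemma opRL_casimir w : d w = 0 -> opRL w = opEE w + 2 *: h (h w) - (2 * c) *: w.
Proof.
move=> dw0; have := casimir_eq w; rewrite dw0 linear0 /opRL /opEE /= => cas.
rewrite -scalerA -cas.
by lincomb [:: ep (em w); em (ep w); h (h w); r (l w); l (r w)].
Qed.

Definition zop (n : nat) (v : V) : V :=
  (1 / 2) *: (r (em v) + l (ep v) - (2 * (n + 1))%:R *: h v).

Variable v0 : V.
Hypotheses (d_v0 : d v0 = 0) (ep_v0 : ep v0 = 0) (em_v0 : em v0 = 0).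

Fixpoint zseq (n : nat) : V := if n is n'.+1 then zop n' (zseq n') else v0.

Definition zprev (n : nat) : V := if n is n'.+1 then zseq n' else 0.

(* [kcas_eig m] is the eigenvalue of C_K on v_m, and [bcoef m] is b_(m+1). *)
Definition kcas_eig (m : nat) : K := m%:R * (m%:R + 1).
Definition bcoef (m : nat) : K := m%:R ^+ 2 * (m%:R ^+ 2 - 1 - c).

(* The induction invariant for u = v_m and u' = v_(m-1). *)
Definition ladder_level (m : nat) (u u' : V) : Prop :=
  [/\ d u = 0, opEE u = (2 * kcas_eig m) *: u
    & opRE u = (- (2 * m%:R)) *: h u + (2 * bcoef m) *: u'].

Lemma zop_ladder m u u' : ladder_level m u u' ->
  zop m u = (- (2 * m%:R + 1)) *: h u + bcoef m *: u'.
Proof.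
case=> _ _ REu; rewrite /zop -[r (em u) + _]/(opRE u) REu.
by lincomb [:: h u; u'].
Qed.

Lemma ladder_level_zop_dEE m u u' : ladder_level m u u' ->
    d u' = 0 -> opEE u' = (2 * kcas_eig m.-1) *: u' ->
  d (zop m u) = 0 /\ opEE (zop m u) = (2 * kcas_eig m.+1) *: zop m u.
Proof.
move=> lev du' EEu'; rewrite (zop_ladder lev); case: lev => du EEu REu.
split; first by rewrite linearD !(linearZZ d) d_h du du' !linear0 addr0.
rewrite linearD !(linearZZ opEE) opEE_h EEu REu EEu' !(linearD h, linearZZ h).
(* [m.-1] is truncated at [m = 0], where the factor [bcoef 0 = 0] kills it. *)
by rewrite /kcas_eig /bcoef; case: m {du EEu REu du' EEu'} => [|n] /=;
  lincomb [:: h u; u'].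
Qed.

Lemma ladder_level_zop0 u : ladder_level 0 u 0 -> ladder_level 1 (zop 0 u) u.
Proof.
move=> lev; have [du EEu REu] := lev.
have EE0 : opEE 0 = (2 * kcas_eig 0) *: 0 by rewrite linear0 scaler0.
have [dz EEz] := ladder_level_zop_dEE lev (linear0 d) EE0.
split=> //; rewrite (zop_ladder lev) linearD !(linearZZ opRE) opRE_h.
rewrite (opRL_casimir du) EEu REu !linear0 !(linearD h, linearZZ h, linear0 h) /kcas_eig /bcoef.
by lincomb [:: h (h u); u].
Qed.

Lemma ladder_level_zopS m u u' : ladder_level m u u' ->
    ladder_level m.+1 (zop m u) u ->
  ladder_level m.+2 (zop m.+1 (zop m u)) (zop m u).
Proof.
move=> lev lev1; have [du EEu _] := lev.
have [dz EEz] := ladder_level_zop_dEE lev1 du EEu.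
split=> //; have [dzu EEzu REzu] := lev1.
rewrite (zop_ladder lev1) linearD !(linearZZ opRE) opRE_h (opRL_casimir dzu) EEzu REzu.
have [_ _ REu] := lev; rewrite REu (zop_ladder lev).
rewrite !(linearD h, linearZZ h) /kcas_eig /bcoef.
by lincomb [:: h (h (h u)); h (h u'); h u; u'].
Qed.

Lemma zseq_level m : ladder_level m (zseq m) (zprev m).
Proof.
have level0 : ladder_level 0 v0 0.
  rewrite /ladder_level /opEE /opRE /= ep_v0 em_v0 !linear0 /kcas_eig /bcoef.
  by split; rewrite // ?mul0r ?mulr0 ?oppr0 !scale0r ?addr0.
suff [] : ladder_level m (zseq m) (zprev m) /\ ladder_level m.+1 (zseq m.+1) (zprev m.+1) by [].
elim: m => [|m [lev lev1]]; first by split; last exact: ladder_level_zop0 level0.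
by split; last exact: ladder_level_zopS lev lev1.
Qed.

Lemma zseq_recurrence m :
  zseq m.+1 = (- (2 * m%:R + 1)) *: h (zseq m) + bcoef m *: zprev m.
Proof. exact: zop_ladder (zseq_level m). Qed.

End LadderRecurrence.

Section Sl2ModuleRelations.
Variables (R : realType) (V : lmodType R[i]) (M : unitary_g_module V).
Local Notation act := (act M).

HB.instance Definition _ X := GRing.isLinear.Build _ _ _ _ (act X) (act_linear M X).

Lemma rC_real (r : R) : rC r = r%:C%C.
Proof. by []. Qed.

Lemma traceless0 : traceless (0 : 'M[R[i]]_2).
Proof. by rewrite /traceless mxtrace0. Qed.

Lemma act0 v : act 0 v = 0.
Proof.
have := act_real_linear M 1 v traceless0 traceless0.
rewrite scaler0 addr0 rC_real rmorph1 scale1r => act0_twice.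
by apply: (@addrI _ (act 0 v)); rewrite addr0 -act0_twice.
Qed.

Lemma actN X : traceless X -> forall v, act (- X) v = - act X v.
Proof.
move=> trX v; have := act_real_linear M (-1) v trX traceless0.
by rewrite !addr0 act0 addr0 rC_real rmorphN1 !scaleN1r.
Qed.

Lemma act_mxlie X Y : traceless X -> traceless Y ->
  forall v, act X (act Y v) = act Y (act X v) + act (mxlie X Y) v.
Proof. by move=> trX trY v; rewrite act_bracket // subrKC. Qed.

Lemma cact_linear X Y : linear (cact M X Y).
Proof.
move=> a u v; rewrite /cact !act_linear.
by lincomb [:: act X u; act X v; act Y u; act Y v].
Qed.

HB.instance Definition _ := GRing.isLinear.Build _ _ _ _ (opD M) (act_linear M _).
HB.instance Definition _ := GRing.isLinear.Build _ _ _ _ (opHt M) (act_linear M _).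
HB.instance Definition _ := GRing.isLinear.Build _ _ _ _ (opEp M) (cact_linear _ _).
HB.instance Definition _ := GRing.isLinear.Build _ _ _ _ (opEm M) (cact_linear _ _).
HB.instance Definition _ := GRing.isLinear.Build _ _ _ _ (opR M) (cact_linear _ _).
HB.instance Definition _ := GRing.isLinear.Build _ _ _ _ (opL M) (cact_linear _ _).

Local Notation h := (act (elHt R)).
Local Notation x1 := (act (elX1 R)).
Local Notation x2 := (act (elX2 R)).
Local Notation y1 := (act (elY1 R)).
Local Notation y2 := (act (elY2 R)).

Let trD := traceless_elD R.
Let trX1 := traceless_elX1 R.
Let trX2 := traceless_elX2 R.
Let trHt := traceless_elHt R.
Let trY1 := traceless_elY1 R.
Let trY2 := traceless_elY2 R.

Lemma opEp_act v : opEp M v = x1 v - ci R *: x2 v.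
Proof. by rewrite /opEp /cact (actN trX2) scalerN. Qed.
Lemma opEm_act v : opEm M v = - x1 v - ci R *: x2 v.
Proof. by rewrite /opEm /cact; congr (_ + _); rewrite (actN trX1, actN trX2) ?scalerN. Qed.
Lemma opR_act v : opR M v = y1 v - ci R *: y2 v.
Proof. by rewrite /opR /cact (actN trY2) scalerN. Qed.
Lemma opL_act v : opL M v = - y1 v - ci R *: y2 v.
Proof. by rewrite /opL /cact; congr (_ + _); rewrite (actN trY1, actN trY2) ?scalerN. Qed.

Lemma x1_h v : x1 (h v) = h (x1 v) - y1 v.
Proof. by rewrite (act_mxlie trX1 trHt) mxlie_X1_Ht (actN trY1). Qed.
Lemma x2_h v : x2 (h v) = h (x2 v) - y2 v.
Proof. by rewrite (act_mxlie trX2 trHt) mxlie_X2_Ht (actN trY2). Qed.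
Lemma h_y1 v : h (y1 v) = y1 (h v) + x1 v.
Proof. by rewrite (act_mxlie trHt trY1) mxlie_Ht_Y1. Qed.
Lemma h_y2 v : h (y2 v) = y2 (h v) + x2 v.
Proof. by rewrite (act_mxlie trHt trY2) mxlie_Ht_Y2. Qed.
Lemma x1_y1 v : x1 (y1 v) = y1 (x1 v) + h v.
Proof. by rewrite (act_mxlie trX1 trY1) mxlie_X1_Y1. Qed.
Lemma x1_y2 v : x1 (y2 v) = y2 (x1 v).
Proof. by rewrite (act_mxlie trX1 trY2) mxlie_X1_Y2 act0 addr0. Qed.
Lemma x2_y1 v : x2 (y1 v) = y1 (x2 v).
Proof. by rewrite (act_mxlie trX2 trY1) mxlie_X2_Y1 act0 addr0. Qed.
Lemma x2_y2 v : x2 (y2 v) = y2 (x2 v) + h v.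
Proof. by rewrite (act_mxlie trX2 trY2) mxlie_X2_Y2. Qed.

Lemma opD_opHt v : opD M (opHt M v) = opHt M (opD M v).
Proof. by rewrite /opD /opHt (act_mxlie trD trHt) mxlie_D_Ht act0 addr0. Qed.

Lemma opEp_opHt v : opEp M (opHt M v) = opHt M (opEp M v) - opR M v.
Proof. exact: (ep_h x1_h x2_h opEp_act opR_act v). Qed.
Lemma opEm_opHt v : opEm M (opHt M v) = opHt M (opEm M v) - opL M v.
Proof. exact: (em_h x1_h x2_h opEm_act opL_act v). Qed.
Lemma opR_opHt v : opR M (opHt M v) = opHt M (opR M v) - opEp M v.
Proof. exact: (r_h h_y1 h_y2 opEp_act opR_act v). Qed.
Lemma opL_opHt v : opL M (opHt M v) = opHt M (opL M v) - opEm M v.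
Proof. exact: (l_h h_y1 h_y2 opEm_act opL_act v). Qed.
Lemma opEp_opL v : opEp M (opL M v) = opL M (opEp M v) - 2 *: opHt M v.
Proof. exact: (ep_l (mulii R) x1_y1 x1_y2 x2_y1 x2_y2 opEp_act opL_act v). Qed.
Lemma opEm_opR v : opEm M (opR M v) = opR M (opEm M v) - 2 *: opHt M v.
Proof. exact: (em_r (mulii R) x1_y1 x1_y2 x2_y1 x2_y2 opEm_act opR_act v). Qed.

Lemma vseq_zseq v0 n :
  vseq M v0 n = zseq (opHt M) (opEp M) (opEm M) (opR M) (opL M) v0 n.
Proof. by elim: n => //= n ->. Qed.

Lemma vprev2_zprev v0 n :
  vprev2 M v0 n.+1 = zprev (opHt M) (opEp M) (opEm M) (opR M) (opL M) v0 n.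
Proof. by case: n => //= n; rewrite vseq_zseq. Qed.

Lemma vseq_recurrence (c : R[i]) v0 :
  (forall v, casimir M v = c *: v) -> K_invariant M v0 ->
  forall m, vseq M v0 m.+1 =
    (- (2 * m%:R + 1)) *: opHt M (vseq M v0 m) + bcoef c m *: vprev2 M v0 m.+1.
Proof.
move=> cas [Dv0 [X1v0 X2v0]] m.
have ep_v0 : opEp M v0 = 0 by rewrite opEp_act X1v0 X2v0 scaler0 subr0.
have em_v0 : opEm M v0 = 0 by rewrite opEm_act X1v0 X2v0 scaler0 subr0 oppr0.
rewrite !vseq_zseq vprev2_zprev.
exact: (zseq_recurrence opD_opHt opEp_opHt opEm_opHt opR_opHt opL_opHt
  opEp_opL opEm_opR cas Dv0 ep_v0 em_v0 m).
Qed.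

End Sl2ModuleRelations.

Unset Implicit Arguments.

Theorem theorem2p6 (R : realType) (s : R) (hs1 : 1 < s) (hs2 : s < 2)
    (V : lmodType R[i]) (M : unitary_g_module V)
    (hcas : forall v : V, casimir M v = rC (s * (s - 2)) *: v)
    (v0 : V) (hunit : inner M v0 v0 = 1) (hK : K_invariant M v0) :
  forall l : nat, (1 <= l)%N ->
    vseq M v0 l =
      ((1 - 2 * (l : int)) %:~R : R[i]) *: opHt M (vseq M v0 l.-1)
      + (rC (((l - 1) ^ 2)%:R * ((((l : int) * ((l : int) - 2)) %:~R) - s * (s - 2))))
          *: vprev2 M v0 l.
Proof.
case=> [//|m] _; rewrite (vseq_recurrence hcas hK m) /=.
congr (_ *: _ + _ *: _); first by ring.
rewrite /bcoef !rC_real !(rmorphM, rmorphB, rmorph_nat, rmorph_int) subSS subn0.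
ring.
Qed.
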